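(* The sign function is not definable in $Q_0$: there is no $\Sigma_m$-term $t(x)$ with only variable $x$ such that $t(q)=\mathrm{sign}(q)$ for all rationals $q$ (evaluated in $Q_0$), where $\mathrm{sign}(q)=-1$ if $q<0$, $0$ if $q=0$, $1$ if $q>0$.
   Context: $\Sigma_m=(0,1,+,\cdot,-,{}^{-1})$. $Q_0$ is the field of rational numbers with its usual $0,1,+,\cdot,-$ and with the total inverse $q^{-1}=1/q$ for $q\neq 0$ and $0^{-1}=0$. *)

From HB Require Import structures.
From mathcomp Require Import all_boot all_order all_algebra.
Set Implicit Arguments. Unset Strict Implicit. Unset Printing Implicit Defensive.
Import Order.TTheory GRing.Theory Num.Theory.
Local Open Scope ring_scope.

Inductive term : Type :=
  | tVar : term
  | tZero : term
  | tOne : term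
  | tAdd : term -> term -> term
  | tMul : term -> term -> term
  | tNeg : term -> term
  | tInv : term -> term.

Definition tinv (q : rat) : rat := if q == 0 then 0 else q^-1.

Fixpoint eval_term (t : term) (q : rat) : rat :=
  match t with
  | tVar => q
  | tZero => 0
  | tOne => 1
  | tAdd a b => eval_term a q + eval_term b q
  | tMul a b => eval_term a q * eval_term b q
  | tNeg a => - eval_term a q
  | tInv a => tinv (eval_term a q)
  end.

Definition sign (q : rat) : rat :=
  if q < 0 then -1 else if q == 0 then 0 else 1.

From mathcomp Require Import all_boot all_order all_algebra.
Import Order.TTheory GRing.Theory Num.Theory.
Local Open Scope ring_scope.

(* Idea: every term function is "generically rational": there are
   polynomials B <> 0, P, Q such that, wherever B does not vanish, Q does
   not vanish and the term equals P/Q.  This is proved by induction on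
   terms, the total inverse of Q_0 being the field inverse of rat (which
   already sends 0 to 0); the only delicate case is inversion of a term
   that is generically 0.

   A nonzero polynomial has finitely many roots, so it cannot vanish at
   every term of an injective sequence.  Hence if a generically rational
   function is constantly c along one injective sequence, then P = c Q as
   polynomials, and Q <> 0.  A generically rational function therefore
   cannot be constant with two distinct values along two injective
   sequences, whereas sign is 1 on the positive integers and -1 on the
   negative ones. *)

Lemma poly_eq0_on_injective_seq {R : idomainType} {p : {poly R}}
    {a : nat -> R} :
  injective a -> (forall n, root p (a n)) -> p = 0.
Proof.
move=> a_inj p_roots.
apply: (@roots_geq_poly_eq0 _ p [seq a i | i <- iota 0 (size p)]).
- by apply/allP=> x /mapP [i _ ->].
- by rewrite map_inj_uniq ?iota_uniq.
- by rewrite size_map size_iota.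
Qed.

Section GenericallyRational.

Context {F : fieldType}.

Definition rational_off (B P Q : {poly F}) (f : F -> F) : Prop :=
  B != 0 /\ forall x, B.[x] != 0 -> Q.[x] != 0 /\ f x = P.[x] / Q.[x].

Definition generically_rational (f : F -> F) : Prop :=
  exists B P Q : {poly F}, rational_off B P Q f.

Lemma generically_rational_eq {f g : F -> F} :
  f =1 g -> generically_rational f -> generically_rational g.
Proof.
move=> fg [B [P [Q [B_neq0 f_rat]]]].
by exists B, P, Q; split=> // x /f_rat; rewrite fg.
Qed.

Lemma generically_rational_id : generically_rational id.
Proof.
exists 1, 'X, 1; split=> [|x _]; first exact: oner_neq0.
by rewrite !hornerE divr1 oner_neq0.
Qed.

Lemma generically_rational_cst (c : F) : generically_rational (fun=> c).
Proof.
exists 1, c%:P, 1; split=> [|x _]; first exact: oner_neq0.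
by rewrite !hornerE divr1 oner_neq0.
Qed.

(* Sums and products: take the product of the exceptional polynomials. *)
Lemma generically_rational_binop (op : F -> F -> F) {f g : F -> F} :
  (forall P1 Q1 P2 Q2 : {poly F}, exists P Q : {poly F},
     forall x, Q1.[x] != 0 -> Q2.[x] != 0 ->
       Q.[x] != 0 /\ op (P1.[x] / Q1.[x]) (P2.[x] / Q2.[x]) = P.[x] / Q.[x]) ->
  generically_rational f -> generically_rational g ->
  generically_rational (fun x => op (f x) (g x)).
Proof.
move=> op_rat [B1 [P1 [Q1 [B1_neq0 f_rat]]]] [B2 [P2 [Q2 [B2_neq0 g_rat]]]].
have [P [Q opPQ]] := op_rat P1 Q1 P2 Q2.
exists (B1 * B2), P, Q; split=> [|x]; first by rewrite mulf_neq0.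
rewrite hornerM mulf_eq0 negb_or => /andP [/f_rat [Q1x ->] /g_rat [Q2x ->]].
exact: opPQ.
Qed.

Lemma generically_rational_add {f g : F -> F} :
  generically_rational f -> generically_rational g ->
  generically_rational (fun x => f x + g x).
Proof.
apply: (@generically_rational_binop +%R) => P1 Q1 P2 Q2.
exists (P1 * Q2 + P2 * Q1), (Q1 * Q2) => x Q1x Q2x.
by rewrite hornerD !hornerM mulf_neq0 // addf_div.
Qed.

Lemma generically_rational_mul {f g : F -> F} :
  generically_rational f -> generically_rational g ->
  generically_rational (fun x => f x * g x).
Proof.
apply: (@generically_rational_binop *%R) => P1 Q1 P2 Q2.
exists (P1 * P2), (Q1 * Q2) => x Q1x Q2x.
by rewrite !hornerM mulf_neq0 // mulf_div.
Qed.

Lemma generically_rational_opp {f : F -> F} :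
  generically_rational f -> generically_rational (fun x => - f x).
Proof.
move=> [B [P [Q [B_neq0 f_rat]]]].
exists B, (- P), Q; split=> // x /f_rat [Qx ->].
by rewrite hornerN mulNr.
Qed.

(* If P = 0 then f is generically 0, and so is its inverse; otherwise the
   roots of P join the exceptional set and the inverse is Q/P. *)
Lemma generically_rational_inv {f : F -> F} :
  generically_rational f -> generically_rational (fun x => (f x)^-1).
Proof.
move=> [B [P [Q [B_neq0 f_rat]]]].
have [P_eq0 | P_neq0] := eqVneq P 0.
  exists B, 0, 1; split=> // x /f_rat [_ ->].
  by rewrite P_eq0 !hornerE invr0 oner_neq0.
exists (B * P), Q, P; split=> [|x]; first by rewrite mulf_neq0.
rewrite hornerM mulf_eq0 negb_or => /andP [/f_rat [Qx ->] Px].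
by rewrite Px invfM invrK mulrC.
Qed.

(* Along an injective sequence the exceptional polynomial does not vanish
   everywhere; so a generically rational function that is constantly c
   along it has numerator c Q, with Q a nonzero denominator. *)
Lemma generically_rational_constant_along {B P Q : {poly F}} {f : F -> F}
    {a : nat -> F} {c : F} :
  rational_off B P Q f -> injective a -> (forall n, f (a n) = c) ->
  P = c *: Q /\ Q != 0.
Proof.
move=> [B_neq0 f_rat] a_inj f_a.
have numerator : B * (P - c *: Q) = 0.
  apply: (poly_eq0_on_injective_seq a_inj) => n.
  rewrite /root hornerM mulf_eq0; have [//|/f_rat [Qan f_an]] := eqVneq.
  by rewrite !hornerE -(f_a n) f_an divfK // subrr.
split.
  apply/eqP; rewrite -subr_eq0.
  by move/eqP: numerator; rewrite mulf_eq0 (negbTE B_neq0).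
apply/eqP=> Q_eq0; move/eqP: B_neq0; apply.
apply: (poly_eq0_on_injective_seq a_inj) => n; apply/negPn/negP.
by move=> /f_rat [+ _]; rewrite Q_eq0 horner0 eqxx.
Qed.

Lemma generically_rational_two_constants {f : F -> F} {a b : nat -> F}
    {c d : F} :
  generically_rational f -> injective a -> injective b ->
  (forall n, f (a n) = c) -> (forall n, f (b n) = d) -> c = d.
Proof.
move=> [B [P [Q f_rat]]] a_inj b_inj f_a f_b.
have [P_c Q_neq0] := generically_rational_constant_along f_rat a_inj f_a.
have [P_d _] := generically_rational_constant_along f_rat b_inj f_b.
apply/eqP; rewrite -subr_eq0.
by move/eqP: P_d; rewrite P_c -subr_eq0 -scalerBl scaler_eq0 (negbTE Q_neq0) orbF.
Qed.

End GenericallyRational.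

Lemma tinvE (q : rat) : tinv q = q^-1.
Proof. by rewrite /tinv; case: eqP => [->|]; rewrite ?invr0. Qed.

Lemma term_generically_rational (t : term) :
  generically_rational (eval_term t).
Proof.
elim: t => /= [|||a IHa b IHb|a IHa b IHb|a IHa|a IHa].
- exact: generically_rational_id.
- exact: generically_rational_cst.
- exact: generically_rational_cst.
- exact: generically_rational_add.
- exact: generically_rational_mul.
- exact: generically_rational_opp.
- apply: (generically_rational_eq _ (generically_rational_inv IHa)) => q.
  by rewrite tinvE.
Qed.

Lemma pos_int_inj {R : numDomainType} : injective (fun n : nat => n.+1%:R : R).
Proof. by move=> m n /eqP; rewrite eqr_nat eqSS => /eqP. Qed.

Lemma neg_int_inj {R : numDomainType} :
  injective (fun n : nat => - n.+1%:R : R).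
Proof. by move=> m n /oppr_inj /pos_int_inj. Qed.

Lemma sign_pos_int (n : nat) : sign n.+1%:R = 1.
Proof. by rewrite /sign ltNge ler0n /= pnatr_eq0. Qed.

Lemma sign_neg_int (n : nat) : sign (- n.+1%:R) = -1.
Proof. by rewrite /sign oppr_lt0 ltr0Sn. Qed.

Theorem corollary3 :
  ~ exists t : term, forall q : rat, eval_term t q = sign q.
Proof.
move=> [t t_sign].
have one_eq_m1 : (1 : rat) = -1.
  apply: (generically_rational_two_constants (term_generically_rational t)
    pos_int_inj neg_int_inj) => n; rewrite t_sign.
  - exact: sign_pos_int.
  - exact: sign_neg_int.
by move/eqP: one_eq_m1; rewrite -subr_eq0 opprK.
Qed.
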